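(* For $G_w$-almost every $w\in\Theta_w$, the distribution $K_w$ has a continuous CDF (is atomless). Consequently the set $\Theta':=\{(w,B)\in\Theta: K_w \text{ has a continuous CDF}\}$ satisfies $G(\Theta')=1$.
   Context: Setting. Fix an integer $d\ge 2$ and constants $U>0$, $B_{\min}>0$. Buyer types are $(w,B)\in\Theta:=(0,U)^d\times(B_{\min},U)$; $\Theta_w:=(0,U)^d$. Item types are $\alpha\in A\subset\mathbb{R}^d_{+}$ (strictly positive orthant); all sets carry the Lebesgue $\sigma$-algebra. $F$ is a probability distribution on $A$ with a density and $G$ a probability distribution on $\Theta$ with a density; $G_w$ is the marginal distribution of $w$ under $G$. Reserve prices: measurable $r:A\to(0,\infty)$. Let $K$ be the distribution of $\alpha/r(\alpha)$ when $\alpha\sim F$, and for $w\in\Theta_w$ let $K_w$ be the distribution of $w^T\gamma$ when $\gamma\sim K$ (i.e. the distribution of $w^T\alpha/r(\alpha)$ under $\alpha\sim F$). *)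

(* R^d is modelled as d.-tuple R with the product
   (Borel) sigma-algebra provided by mathcomp-analysis. *)
From mathcomp Require Import all_boot all_order all_algebra.
From mathcomp Require Import all_classical all_reals all_analysis.
Import Order.TTheory GRing.Theory Num.Theory.
Import numFieldNormedType.Exports.
Set Implicit Arguments. Unset Strict Implicit. Unset Printing Implicit Defensive.
Local Open Scope classical_set_scope.
Local Open Scope ring_scope.

Section Defs.
Variable R : realType.

(* Lebesgue integral over R^n of a function with values in \bar R, written as
   the n-fold iterated one-dimensional Lebesgue integral (by Tonelli this is
   the integral against n-dimensional Lebesgue measure for non-negative
   measurable integrands, the only case used below). *)
Fixpoint lebesgue_int_tuple (n : nat) : (n.-tuple R -> \bar R) -> \bar R :=
  match n return (n.-tuple R -> \bar R) -> \bar R with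
  | 0 => fun g => g [tuple]
  | n'.+1 => fun g =>
      (\int[@lebesgue_measure R]_x
          lebesgue_int_tuple (fun t => g [tuple of x :: t]))%E
  end.

Definition dotv (d : nat) (w a : d.-tuple R) : R :=
  \sum_(i < d) tnth w i * tnth a i.

Definition has_density_tuple (d : nat) (P : probability (d.-tuple R) R) : Prop :=
  exists f : d.-tuple R -> R,
    measurable_fun setT f /\ (forall x, 0 <= f x) /\
    forall S, measurable S ->
      P S = lebesgue_int_tuple (fun x => ((\1_S x : R) * f x)%:E).

Definition has_density_pair (d : nat) (P : probability (d.-tuple R * R)%type R) : Prop :=
  exists g : (d.-tuple R * R)%type -> R,
    measurable_fun setT g /\ (forall x, 0 <= g x) /\
    forall S, measurable S ->
      P S = (\int[@lebesgue_measure R]_b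
               lebesgue_int_tuple (fun w => ((\1_S (w, b) : R) * g (w, b))%:E))%E.

(* CDF of K_w: the law of  w^T alpha / r(alpha)  when alpha ~ F, F concentrated on A. *)
Definition Kw_cdf (d : nat) (F : probability (d.-tuple R) R) (A : set (d.-tuple R))
    (r : d.-tuple R -> R) (w : d.-tuple R) (t : R) : R :=
  fine (F (A `&` [set a | dotv w a / r a <= t])).

Definition Theta (d : nat) (U Bmin : R) : set (d.-tuple R * R)%type :=
  [set p | (forall i, 0 < tnth p.1 i < U) /\ Bmin < p.2 < U].

Definition Theta' (d : nat) (U Bmin : R) (F : probability (d.-tuple R) R)
    (A : set (d.-tuple R)) (r : d.-tuple R -> R) : set (d.-tuple R * R)%type :=
  [set p | Theta U Bmin p /\ continuous (Kw_cdf F A r p.1)].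

End Defs.

From mathcomp Require Import all_boot all_order all_algebra.
From mathcomp Require Import all_classical all_reals all_analysis.
From mathcomp Require Import lra ring measurable_realfun.
Import Order.TTheory GRing.Theory Num.Theory.
Import numFieldNormedType.Exports.
Set Implicit Arguments. Unset Strict Implicit. Unset Printing Implicit Defensive.
Local Open Scope classical_set_scope.
Local Open Scope ring_scope.

(* For w in the positive orthant, K_w is the law under F of the ratio
   a |-> w^T a / r(a) on A, so its CDF is continuous unless some level set
   ("atom") {a in A | w^T a / r(a) = tau} has positive F-mass
   ([atomless_cdf_continuous]).  Freeze all coordinates of w except the last
   one, y.  Atoms for two different pairs (y, tau) are either disjoint or meet
   inside a graph {a | a_last = c * (partial dot product)} over the other
   coordinates, which is F-null since F has a density.  A probability carries
   only countably many pairwise almost disjoint sets of positive mass, so only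
   countably many y give K_w an atom.  The set of "atomic" weights therefore
   has countable, hence Lebesgue-null, last-coordinate sections, and is null
   for G, which has a density.  It is measurable because it is the set where
   the (F x F)-mass of pairs with equal ratios under w is positive. *)

Lemma invS_lt (R : realType) (x : R) : 0 < x -> exists k : nat, k.+1%:R^-1 < x.
Proof.
move=> x0; have [N _ HN] := near_infty_natSinv_lt (PosNum x0).
by exists N; apply: HN => /=.
Qed.

Lemma invS_gt0 (R : realType) (k : nat) : 0 < k.+1%:R^-1 :> R.
Proof. by rewrite invr_gt0 ltr0Sn. Qed.

Lemma invS_le (R : realType) (i j : nat) : (i <= j)%N -> j.+1%:R^-1 <= i.+1%:R^-1 :> R.
Proof. by move=> ij; rewrite lef_pV2 ?posrE ?ltr0Sn // ler_nat ltnS. Qed.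

Lemma nondecreasing_continuous_seq (R : realType) (c : R -> R) (x : R) :
  {homo c : s t / s <= t} ->
  (fun k => c (x + k.+1%:R^-1)) @ \oo --> c x ->
  (fun k => c (x - k.+1%:R^-1)) @ \oo --> c x ->
  {for x, continuous c}.
Proof.
move=> cmono right left; apply/cvgrPdist_lt => e e0.
have [k1 Hk1] : exists k : nat, c (x + k.+1%:R^-1) - c x < e.
  have /cvgrPdist_lt /(_ e e0) [N _ HN] := right.
  exists N; have := HN N (leqnn N); rewrite /= ltr_distlC => /andP[_].
  move: (c (x + _)) => u; lra.
have [k2 Hk2] : exists k : nat, c x - c (x - k.+1%:R^-1) < e.
  have /cvgrPdist_lt /(_ e e0) [N _ HN] := left.
  exists N; have := HN N (leqnn N); rewrite /= ltr_distlC => /andP[+ _].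
  move: (c (x - _)) => u; lra.
apply/nbhs_ballP; exists (k1 + k2).+1%:R^-1; first exact: invS_gt0.
move=> y; rewrite /ball /= ltr_distlC => /andP[Hy1 Hy2].
have c1 : c y <= c (x + k1.+1%:R^-1).
  apply/cmono/ltW; apply: (lt_le_trans Hy2).
  by rewrite lerD2l invS_le // leq_addr.
have c2 : c (x - k2.+1%:R^-1) <= c y.
  apply/cmono/ltW; apply: le_lt_trans Hy1.
  by rewrite lerD2l lerN2 invS_le // leq_addl.
have c3 : c x <= c (x + k1.+1%:R^-1) by apply: cmono; rewrite lerDl ltW // invS_gt0.
have c4 : c (x - k2.+1%:R^-1) <= c x.
  by apply: cmono; rewrite lerBlDr lerDl ltW // invS_gt0.
rewrite ltr_distlC; move: Hk1 Hk2 c1 c2 c3 c4.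
move: (c (x + _)) (c (x - _)) (c x) (c y) => u v p q; lra.
Qed.

Section AtomlessCdf.
Variables (d : measure_display) (X : measurableType d) (R : realType).
Variables (mu : probability X R) (D : set X) (f : X -> R).
Hypotheses (mD : measurable D) (mf : measurable_fun D f).

Definition sublevel (t : R) : set X := D `&` [set x | f x <= t].

Lemma measurable_sublevel t : measurable (sublevel t).
Proof.
have -> : sublevel t = D `&` f @^-1` `]-oo, t].
  by apply/seteqP; split=> x /=; rewrite in_itv.
exact: mf.
Qed.

Lemma measurable_level t : measurable (D `&` [set x | f x = t]).
Proof.
have -> : D `&` [set x | f x = t] = D `&` f @^-1` [set t] by [].
exact: mf mD _ (measurable_set1 t).
Qed.

Local Hint Resolve measurable_sublevel measurable_level : core.

Lemma sublevel_mono s t : s <= t -> sublevel s `<=` sublevel t.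
Proof. by move=> st x [Dx /= fx]; split=> //=; exact: le_trans st. Qed.

Lemma bigcap_sublevel t : \bigcap_k sublevel (t + k.+1%:R^-1) = sublevel t.
Proof.
apply/seteqP; split; last first.
  by move=> x tx k _; apply: (sublevel_mono _ tx); rewrite lerDl ltW // invS_gt0.
move=> x H; have [Dx _] := H 0%N I; split => //=.
rewrite leNgt; apply/negP => ftx.
have [k Hk] : exists k : nat, k.+1%:R^-1 < f x - t by apply: invS_lt; rewrite subr_gt0.
by have [_ /= ftk] := H k I; move: Hk ftk; move: (k.+1%:R^-1) => e; lra.
Qed.

Lemma bigcup_sublevel t : \bigcup_k sublevel (t - k.+1%:R^-1) = D `&` [set x | f x < t].
Proof.
apply/seteqP; split.
  move=> x [k _ [Dx /= H]]; split => //=; apply: (le_lt_trans H).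
  by rewrite ltrBlDr ltrDl invS_gt0.
move=> x [Dx /= ftx].
have [k Hk] : exists k : nat, k.+1%:R^-1 < t - f x by apply: invS_lt; rewrite subr_gt0.
by exists k => //; split => //=; move: Hk; move: (k.+1%:R^-1) => e; lra.
Qed.

Lemma sublevel_split t :
  sublevel t = (D `&` [set x | f x < t]) `|` (D `&` [set x | f x = t]).
Proof.
apply/seteqP; split.
  by move=> x [Dx /=]; rewrite le_eqVlt => /orP[/eqP|]; [right|left].
by move=> x [] [Dx /= H]; split => //=; [exact: ltW|rewrite H].
Qed.

(* If f has no atom under mu, the CDF  t |-> mu {x in D | f x <= t}  is
   continuous: right-continuity holds always, left-continuity because the
   jump at t is the mass of the level set {f = t}. *)
Lemma atomless_cdf_continuous :
  (forall t, mu (D `&` [set x | f x = t]) = 0%E) ->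
  continuous (fun t => fine (mu (D `&` [set x | f x <= t]))).
Proof.
move=> noatom; rewrite -/sublevel; set c := fun t => fine (mu (sublevel t)).
have finc t : mu (sublevel t) = (c t)%:E.
  by rewrite /c fineK //; apply: fin_num_measure.
have cmono s t : s <= t -> c s <= c t.
  move=> st; rewrite -lee_fin -!finc; apply: le_measure; rewrite ?inE //.
  exact: sublevel_mono.
move=> t; apply: nondecreasing_continuous_seq => //.
- have : (fun k => (c (t + k.+1%:R^-1))%:E) @ \oo --> (c t)%:E.
    rewrite -finc; under eq_fun do rewrite -finc.
    rewrite -bigcap_sublevel; apply: nonincreasing_cvg_mu => //.
    + by apply: (le_lt_trans (probability_le1 _ _)); [|exact: ltry].
    + by rewrite bigcap_sublevel.
    + move=> i j ij; apply/subsetPset/sublevel_mono.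
      by rewrite lerD2l invS_le.
  by move/fine_cvgP => [].
- have : (fun k => (c (t - k.+1%:R^-1))%:E) @ \oo --> (c t)%:E.
    rewrite -finc sublevel_split -bigcup_sublevel measureU0 //; last 2 first.
    + exact: bigcupT_measurable.
    + exact: noatom.
    under eq_fun do rewrite -finc.
    apply: nondecreasing_cvg_mu => //; first exact: bigcupT_measurable.
    move=> i j ij; apply/subsetPset/sublevel_mono.
    by rewrite lerD2l lerN2 invS_le.
  by move/fine_cvgP => [].
Qed.

End AtomlessCdf.

Lemma measurable_funV (d : measure_display) (X : measurableType d) (R : realType)
    (D : set X) (g : X -> R) :
  measurable D -> measurable_fun D g -> (forall x, D x -> g x != 0) ->
  measurable_fun D (fun x => (g x)^-1).
Proof.
move=> mD mg g0; change (measurable_fun D ((@GRing.inv R) \o g)).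
apply: (measurable_comp (F := [set x : R | x != 0])) => //.
- by apply: open_measurable; exact: open_neq.
- by move=> _ [x Dx <-]; exact: g0.
- apply: open_continuous_measurable_fun; first exact: open_neq.
  by move=> x /set_mem x0; exact: inv_continuous.
Qed.

Lemma measurable_dotv (R : realType) (d : measure_display) (X : measurableType d) n
    (f g : X -> n.-tuple R) :
  measurable_fun setT f -> measurable_fun setT g ->
  measurable_fun setT (fun x => dotv (f x) (g x)).
Proof.
move=> mf mg; apply: measurable_sum => i; apply: measurable_funM.
- exact: measurableT_comp (measurable_tnth i) mf.
- exact: measurableT_comp (measurable_tnth i) mg.
Qed.

Definition pos_orthant (R : realType) n : set (n.-tuple R) :=
  [set w | forall i, 0 < tnth w i].

Lemma measurable_pos_orthant (R : realType) n : measurable (@pos_orthant R n).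
Proof.
have -> : @pos_orthant R n =
    \bigcap_(i in [set: 'I_n]) (fun w => tnth w i) @^-1` `]0, +oo[.
  apply/seteqP; split=> w /= wpos i.
    by move=> _; rewrite /= in_itv /= andbT wpos.
  by have := wpos i I; rewrite /= in_itv /= andbT.
apply: fin_bigcap_measurable; first exact: finite_finset.
by move=> i _; rewrite -[X in measurable X]setTI; exact: measurable_tnth.
Qed.

Lemma measurable_last_graph (R : realType) n (h : n.+1.-tuple R -> R) :
  measurable_fun setT h -> measurable [set a | tnth a ord_max = h a].
Proof.
move=> mh.
have mdiff : measurable_fun setT (fun a : n.+1.-tuple R => tnth a ord_max - h a).
  exact: measurable_funB (measurable_tnth ord_max) mh.
have := mdiff measurableT _ (measurable_set1 0).
by rewrite setTI; congr measurable; apply/seteqP; split=> a /=;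
  [move/eqP; rewrite subr_eq0 => /eqP|move=> ->; rewrite subrr].
Qed.

Section LastCoordinate.
Variable R : realType.

Definition upd_last n (t : n.+1.-tuple R) (y : R) : n.+1.-tuple R :=
  [tuple if i == ord_max then y else tnth t i | i < n.+1].

Lemma tnth_upd_last n (t : n.+1.-tuple R) y i :
  tnth (upd_last t y) i = if i == ord_max then y else tnth t i.
Proof. by rewrite tnth_mktuple. Qed.

Lemma tnth_upd_last_widen n (t : n.+1.-tuple R) y (i : 'I_n) :
  tnth (upd_last t y) (widen_ord (leqnSn n) i) = tnth t (widen_ord (leqnSn n) i).
Proof.
by rewrite tnth_upd_last -(inj_eq val_inj) /= ltn_eqF.
Qed.

Lemma measurable_upd_last n (t : n.+1.-tuple R) : measurable_fun setT (upd_last t).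
Proof.
apply/measurable_fun_tnthP => i; rewrite /comp.
under eq_fun do rewrite tnth_upd_last.
by case: (i == ord_max); [exact: measurable_id|exact: measurable_cst].
Qed.

(* The iterated integral over R^(n+1) vanishes as soon as every integral in
   the last coordinate does: the last coordinate is the innermost one. *)
Lemma lebesgue_int_tuple_last0 n (h : n.+1.-tuple R -> \bar R) :
  (forall t, (\int[@lebesgue_measure R]_y h (upd_last t y) = 0)%E) ->
  lebesgue_int_tuple h = 0%E.
Proof.
elim: n h => [|n IH] h H /=.
  rewrite -(H [tuple 0]); apply: eq_integral => y _; congr h.
  by apply: eq_from_tnth => i; rewrite tnth_upd_last (ord1 i) tnth0.
rewrite (eq_integral (fun _ => 0%E)) ?integral0// => x _.
apply: (IH (fun t => h [tuple of x :: t])) => t.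
rewrite -(H [tuple of x :: t]); apply: eq_integral => y _; congr h.
apply: eq_from_tnth => i; rewrite tnth_upd_last.
case: (unliftP ord0 i) => [j ->|->]; last by rewrite !(tnth_nth 0).
rewrite !tnthS tnth_upd_last.
by rewrite -(inj_eq val_inj) -[lift _ _ == _](inj_eq val_inj) /= /bump add1n eqSS.
Qed.

Lemma lebesgue_int_tuple_null_sections n (S : set (n.+1.-tuple R))
    (g : n.+1.-tuple R -> R) :
  measurable S -> measurable_fun setT g ->
  (forall t, lebesgue_measure [set y | S (upd_last t y)] = 0%E) ->
  lebesgue_int_tuple (fun x => ((\1_S x : R) * g x)%:E) = 0%E.
Proof.
move=> mS mg null; apply: lebesgue_int_tuple_last0 => t.
have mC : measurable [set y | S (upd_last t y)].
  by rewrite -[X in measurable X]setTI; exact: measurable_upd_last.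
rewrite (ae_eq_integral (cst 0%E)) ?integral0 //.
- apply/measurable_EFinP; apply: measurable_funM.
    by apply: measurableT_comp (measurable_upd_last t); exact: measurable_indic.
  exact: measurableT_comp (measurable_upd_last t).
- exists [set y | S (upd_last t y)]; split; [exact: mC|exact: null|].
  move=> y /= Hy; apply: contrapT => Sy.
  by apply: Hy => _; rewrite indicE memNset ?mul0r.
Qed.

End LastCoordinate.

Lemma density_tuple_null_sections (R : realType) n
    (P : probability (n.+1.-tuple R) R) (S : set (n.+1.-tuple R)) :
  has_density_tuple P -> measurable S ->
  (forall t, lebesgue_measure [set y | S (upd_last t y)] = 0%E) -> P S = 0%E.
Proof.
case=> f [mf [_ Pf]] mS null; rewrite Pf //.
exact: lebesgue_int_tuple_null_sections.
Qed.

Lemma density_pair_null_sections (R : realType) n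
    (P : probability (n.+1.-tuple R * R)%type R) (N : set (n.+1.-tuple R)) :
  has_density_pair P -> measurable N ->
  (forall t, lebesgue_measure [set y | N (upd_last t y)] = 0%E) ->
  P (N `*` setT) = 0%E.
Proof.
case=> g [mg [_ Pg]] mN null; rewrite Pg; last exact: measurableX.
rewrite integral0_eq // => b _.
have -> : (fun w => ((\1_(N `*` setT) (w, b) : R) * g (w, b))%:E) =
          (fun w => ((\1_N w : R) * g (w, b))%:E).
  by apply/funext => w; rewrite !indicE in_setX in_setT andbT.
apply: lebesgue_int_tuple_null_sections => //.
by apply: measurableT_comp mg _; apply: measurable_fun_pair.
Qed.

(* A graph {a | a_last = h a} carries no mass under a probability with a
   density when h ignores the last coordinate: every section is a point. *)
Lemma density_tuple_graph_null (R : realType) n (P : probability (n.+1.-tuple R) R)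
    (h : n.+1.-tuple R -> R) :
  has_density_tuple P -> measurable_fun setT h ->
  (forall a y, h (upd_last a y) = h a) ->
  P [set a | tnth a ord_max = h a] = 0%E.
Proof.
move=> densP mh h_last.
apply: density_tuple_null_sections => //; first exact: measurable_last_graph.
move=> t; rewrite -(lebesgue_measure_set1 (h t)); congr lebesgue_measure.
by apply/seteqP; split=> y /=; rewrite tnth_upd_last eqxx h_last.
Qed.

Lemma measure_big_setU_null_overlaps (d : measure_display) (X : measurableType d)
    (R : realType) (mu : {measure set X -> \bar R}) (I : eqType) (S : I -> set X)
    (s : seq I) :
  uniq s -> (forall i, measurable (S i)) -> (forall i, (mu (S i) < +oo)%E) ->
  (forall i j, i != j -> mu (S i `&` S j) = 0%E) ->
  mu (\big[setU/set0]_(i <- s) S i) = (\sum_(i <- s) mu (S i))%E.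
Proof.
move=> + mS finS null_inter; elim: s => [|i s IH]; first by rewrite !big_nil measure0.
rewrite /= => /andP[i_notin us].
have mU : measurable (\big[setU/set0]_(j <- s) S j) by exact: bigsetU_measurable.
have overlap0 : mu (S i `&` \big[setU/set0]_(j <- s) S j) = 0%E.
  elim: s i_notin {IH us mU} => [|j s IH] i_notin.
    by rewrite big_nil setI0 measure0.
  rewrite big_cons setIUr null_set_setU //.
  - exact: measurableI.
  - by apply: measurableI => //; exact: bigsetU_measurable.
  - by apply: null_inter; apply: contraNneq i_notin => ->; rewrite mem_head.
  - by apply: IH; apply: contra i_notin => js; rewrite in_cons js orbT.
by rewrite !big_cons measureUfinl // overlap0 sube0 IH.
Qed.

Section AlmostDisjointFamily.
Variables (d : measure_display) (X : measurableType d) (R : realType).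
Variables (mu : probability X R) (I : choiceType) (S : I -> set X).
Hypothesis mS : forall i, measurable (S i).
Hypothesis null_inter : forall i j, i != j -> mu (S i `&` S j) = 0%E.

Lemma finite_heavy_members (k : nat) :
  finite_set [set i | ((k.+1%:R^-1)%:E < mu (S i))%E].
Proof.
apply: contrapT => /(infinite_set_fset k.+2) [B heavyB cardB].
set s := finmap.enum_fset B in cardB.
have sum_union : (\sum_(i <- s) mu (S i))%E = mu (\big[setU/set0]_(i <- s) S i).
  apply/esym/measure_big_setU_null_overlaps => //; first exact: finmap.fset_uniq.
  by move=> i; apply: (le_lt_trans (probability_le1 _ _)); [|exact: ltry].
have le_one : (mu (\big[setU/set0]_(i <- s) S i) <= 1)%E.
  by apply: probability_le1; exact: bigsetU_measurable.
have : (size s)%:R / k.+1%:R <= 1 :> R.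
  rewrite -lee_fin; apply: le_trans le_one; rewrite -sum_union.
  have -> : ((size s)%:R / k.+1%:R : R)%:E = (\sum_(i <- s) (k.+1%:R^-1)%:E)%E.
    by rewrite sumEFin big_const_seq count_predT iter_addr_0 mulr_natl.
  by rewrite big_seq [leRHS]big_seq; apply: lee_sum => i /heavyB /ltW.
by rewrite ler_pdivrMr ?ltr0Sn // mul1r ler_nat leqNgt cardB.
Qed.

Lemma countable_positive_members : countable [set i | (0 < mu (S i))%E].
Proof.
apply: (@sub_countable _ _ _
  (\bigcup_(k in [set: nat]) [set i | ((k.+1%:R^-1)%:E < mu (S i))%E])).
  apply: subset_card_le => i /= mu_pos.
  have fin : mu (S i) \is a fin_num by apply: fin_num_measure.
  move: mu_pos; rewrite -(fineK fin) lte_fin => /invS_lt[k Hk].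
  by exists k => //=; rewrite -(fineK fin) lte_fin.
apply: bigcup_countable; first exact: countableP.
by move=> k _; apply: finite_set_countable; exact: finite_heavy_members.
Qed.

End AlmostDisjointFamily.

Lemma affine_pair_proportional (K : realFieldType) (y y' tau tau' L x rho : K) :
  y != y' -> 0 < L -> L + y * x = tau * rho -> L + y' * x = tau' * rho ->
  let c := (tau - tau') / (y - y') in x = c / (tau - y * c) * L.
Proof.
move=> yy' Lpos H1 H2 c; have yy0 : y - y' != 0 by rewrite subr_eq0.
have hyx : (y - y') * x = (tau - tau') * rho.
  by transitivity ((L + y * x) - (L + y' * x)); [ring|rewrite H1 H2; ring].
have hx : x = c * rho by apply: (mulfI yy0); rewrite hyx /c; field.
have hL : L = (tau - y * c) * rho.
  by transitivity ((L + y * x) - y * x); [ring|rewrite H1 hx; ring].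
have e0 : tau - y * c != 0.
  by apply: contraTneq Lpos => e0; rewrite hL e0 mul0r ltxx.
by rewrite hx hL; field.
Qed.

Section Model.
Variables (R : realType) (n : nat).
Local Notation T := (n.+2.-tuple R).
Variables (A : set T) (F : probability T R) (r : T -> R).
Hypotheses (mA : measurable A) (A_pos : forall a, A a -> forall i, 0 < tnth a i).
Hypotheses (mr : measurable_fun A r) (r_pos : forall a, A a -> 0 < r a).

Definition ratio (w a : T) : R := dotv w a / r a.

Definition atom (w : T) (tau : R) : set T := A `&` [set a | ratio w a = tau].

Lemma measurable_ratio_pair : measurable_fun (setT `*` A) (fun p : T * T => ratio p.1 p.2).
Proof.
have mXA : measurable ([set: T] `*` A) by exact: measurableX.
apply: measurable_funM.
  apply: (measurable_funS measurableT) => //.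
  exact: measurable_dotv measurable_fst measurable_snd.
apply: measurable_funV => //; last by move=> [w a] [_ /= Aa]; rewrite gt_eqF ?r_pos.
apply: (measurable_comp (F := A)) mr _ => //; first by move=> _ [[w a] [_ Aa] <-].
by apply: (measurable_funS measurableT) => //; exact: measurable_snd.
Qed.

Lemma measurable_ratio w : measurable_fun A (ratio w).
Proof.
apply: (measurable_comp (F := setT `*` A) (f := fun p : T * T => ratio p.1 p.2)
  (g := fun a => (w, a))) => //; first exact: measurableX.
- by move=> _ [a Aa <-].
- exact: measurable_ratio_pair.
- apply: (measurable_funS measurableT) => //.
  by apply: measurable_fun_pair; [exact: measurable_cst|exact: measurable_id].
Qed.

Lemma measurable_atom w tau : measurable (atom w tau).
Proof. exact: measurable_level mA (measurable_ratio w) tau. Qed.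

Lemma Kw_cdf_continuous w : (forall tau, F (atom w tau) = 0%E) ->
  continuous (Kw_cdf F A r w).
Proof. exact: atomless_cdf_continuous mA (measurable_ratio w). Qed.

Lemma ratio_eq w a tau : A a -> (ratio w a = tau) <-> (dotv w a = tau * r a).
Proof.
move=> Aa; have r0 : r a != 0 by rewrite gt_eqF ?r_pos.
by rewrite /ratio; split => [<-|->]; field.
Qed.

Definition dotv_init (t a : T) : R :=
  \sum_(i < n.+1) tnth t (widen_ord (leqnSn _) i) * tnth a (widen_ord (leqnSn _) i).

Lemma dotv_upd_last t y a : dotv (upd_last t y) a = dotv_init t a + y * tnth a ord_max.
Proof.
rewrite /dotv big_ord_recr /= tnth_upd_last eqxx; congr (_ + _).
by apply: eq_bigr => i _; rewrite tnth_upd_last_widen.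
Qed.

Lemma dotv_init_upd_last t a y : dotv_init t (upd_last a y) = dotv_init t a.
Proof. by apply: eq_bigr => i _; rewrite tnth_upd_last_widen. Qed.

Lemma measurable_dotv_init t : measurable_fun setT (dotv_init t).
Proof.
apply: measurable_sum => i; apply: measurable_funM => //.
exact: measurable_tnth.
Qed.

Definition init_pos (t : T) : Prop :=
  forall i : 'I_n.+1, 0 < tnth t (widen_ord (leqnSn _) i).

Lemma dotv_init_gt0 t a : init_pos t -> A a -> 0 < dotv_init t a.
Proof.
move=> tpos Aa; rewrite /dotv_init big_ord_recl ltr_wpDr //.
- by apply: sumr_ge0 => i _; apply/ltW/mulr_gt0; [exact: tpos|exact: A_pos].
- by apply: mulr_gt0; [exact: tpos|exact: A_pos].
Qed.

Hypothesis densF : has_density_tuple F.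

(* Moving only the last coordinate of w, atoms overlap in F-null sets: for
   distinct last weights the overlap lies in a graph over the first
   coordinates (affine_pair_proportional), for equal ones it is empty. *)
Lemma atom_overlap_null t : init_pos t -> forall p q : R * R, p != q ->
  F (atom (upd_last t p.1) p.2 `&` atom (upd_last t q.1) q.2) = 0%E.
Proof.
move=> tpos [y tau] [y' tau'] /=; have [<- pq|yy' _] := eqVneq y y'.
  have tt' : tau != tau' by apply: contra_neq pq => ->.
  suff -> : atom (upd_last t y) tau `&` atom (upd_last t y) tau' = set0 by [].
  apply/seteqP; split => // a [[_ /= e1] [_ /= e2]].
  by move: tt'; rewrite -e1 -e2 eqxx.
set c := (tau - tau') / (y - y').
pose h a := c / (tau - y * c) * dotv_init t a.
have mh : measurable_fun setT h by exact: measurable_funM (measurable_dotv_init t).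
apply/eqP; rewrite -measure_le0 -(density_tuple_graph_null densF mh); last first.
  by move=> a z; rewrite /h dotv_init_upd_last.
apply: le_measure; rewrite ?inE.
- by apply: measurableI; exact: measurable_atom.
- exact: measurable_last_graph.
move=> a [[Aa /(ratio_eq _ _ Aa) H1] [_ /(ratio_eq _ _ Aa) H2]] /=.
rewrite dotv_upd_last in H1; rewrite dotv_upd_last in H2.
exact: affine_pair_proportional yy' (dotv_init_gt0 tpos Aa) H1 H2.
Qed.

Lemma countable_atom_section t : init_pos t ->
  countable [set y | exists tau, (0 < F (atom (upd_last t y) tau))%E].
Proof.
move=> tpos; have mS (p : R * R) : measurable (atom (upd_last t p.1) p.2).
  exact: measurable_atom.
apply: sub_countable (countable_positive_members mS (atom_overlap_null tpos)).
apply: card_le_trans (card_image_le fst _); apply: subset_card_le.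
by move=> y [tau Htau]; exists (y, tau).
Qed.

Definition tie_set : set (T * (T * T)) :=
  [set z | A z.2.1 /\ A z.2.2 /\ ratio z.1 z.2.1 = ratio z.1 z.2.2].

Lemma measurable_tie_set : measurable tie_set.
Proof.
pose D0 : set (T * (T * T)) := setT `*` (A `*` A).
have mD0 : measurable D0 by apply: measurableX => //; exact: measurableX.
have mratio (g : T * T -> T) : measurable_fun setT g ->
    (forall z, D0 z -> A (g z.2)) -> measurable_fun D0 (fun z => ratio z.1 (g z.2)).
  move=> mg gA; apply: (measurable_comp (F := setT `*` A)
    (f := fun p : T * T => ratio p.1 p.2) (g := fun z => (z.1, g z.2))) => //.
  - exact: measurableX.
  - by move=> _ [z D0z <-]; split => //; exact: gA.
  - exact: measurable_ratio_pair.
  apply: (measurable_funS measurableT) => //; apply: measurable_fun_pair => //.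
  exact: measurableT_comp mg measurable_snd.
have mdiff : measurable_fun D0 (fun z => ratio z.1 z.2.1 - ratio z.1 z.2.2).
  by apply: measurable_funB; apply: mratio => // z [_ []].
have := mdiff mD0 _ (measurable_set1 0); congr measurable.
apply/seteqP; split => z.
  by move=> [[_ [A1 A2]] /= /eqP]; rewrite subr_eq0 => /eqP.
by move=> [A1 [A2 /= ->]]; rewrite subrr.
Qed.

(* The F x F-mass of the pairs tied under w; it is positive exactly when K_w
   has an atom, and it is measurable in w. *)
Definition tie_mass (w : T) : \bar R :=
  product_subprobability (F : subprobability _ R, F : subprobability _ R)
    (xsection tie_set w).

Lemma measurable_tie_mass : measurable_fun setT tie_mass.
Proof. exact: measurable_fun_xsection measurable_tie_set. Qed.

Lemma atom_tie_mass w tau : (F (atom w tau) * F (atom w tau) <= tie_mass w)%E.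
Proof.
rewrite -product_measure1E; try exact: measurable_atom.
apply: le_measure; rewrite ?inE.
- by apply: measurableX; exact: measurable_atom.
- exact: measurable_xsection measurable_tie_set.
move=> [a b] [[Aa /= Ha] [Ab /= Hb]]; apply/xsectionP.
by split => //; split => //=; rewrite Ha Hb.
Qed.

Lemma tie_mass_atom w : (0 < tie_mass w)%E -> exists tau, (0 < F (atom w tau))%E.
Proof.
apply: contraPP => /forallNP no_atom.
have F0 tau : F (atom w tau) = 0%E.
  by apply/eqP; rewrite eq_le measure_ge0 andbT leNgt; apply/negP; exact: no_atom.
rewrite /tie_mass /= /product_measure1 integral0_eq ?ltxx // => a _ /=.
apply/eqP; rewrite eq_le measure_ge0 andbT.
have [Aa|nAa] := pselect (A a); last first.
  rewrite (_ : xsection _ _ = set0) ?measure0 //.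
  by apply/seteqP; split=> // b /xsectionP /xsectionP [].
rewrite -(F0 (ratio w a)); apply: le_measure; rewrite ?inE.
- by apply: measurable_xsection; apply: measurable_xsection; exact: measurable_tie_set.
- exact: measurable_atom.
by move=> b /xsectionP /xsectionP [_ [Ab /= ->]].
Qed.

Definition atomic_weights : set T :=
  [set w | pos_orthant w /\ (0 < tie_mass w)%E].

Lemma measurable_atomic_weights : measurable atomic_weights.
Proof.
have -> : atomic_weights =
    @pos_orthant R n.+2 `&` (setT `&` tie_mass @^-1` `]0%E, +oo[).
  by apply/seteqP; split => w /=; rewrite in_itv /= andbT => -[] // ? [].
apply: measurableI; first exact: measurable_pos_orthant.
exact: measurable_tie_mass (emeasurable_itv _).
Qed.

Lemma continuous_Kw_off_atomic w : pos_orthant w -> ~ atomic_weights w ->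
  continuous (Kw_cdf F A r w).
Proof.
move=> wpos not_atomic; apply: Kw_cdf_continuous => tau.
apply/eqP; rewrite eq_le measure_ge0 andbT leNgt; apply/negP => pos.
apply: not_atomic; split => //.
exact: lt_le_trans (mule_gt0 pos pos) (atom_tie_mass w tau).
Qed.

Lemma countable_atomic_weights_section t :
  countable [set y | atomic_weights (upd_last t y)].
Proof.
have [[y0 [pos0 _]]|none] := pselect (exists y, atomic_weights (upd_last t y)).
  have tpos : init_pos t.
    by move=> i; have := pos0 (widen_ord (leqnSn _) i); rewrite tnth_upd_last_widen.
  apply: sub_countable (countable_atom_section tpos); apply: subset_card_le.
  by move=> y [_ /tie_mass_atom].
rewrite (_ : [set y | _] = set0); first exact: countable0.
by apply/seteqP; split => // y Ny; apply: none; exists y.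
Qed.

Lemma atomic_weights_null (G : probability (T * R)%type R) :
  has_density_pair G -> G (atomic_weights `*` setT) = 0%E.
Proof.
move=> densG; apply: density_pair_null_sections densG measurable_atomic_weights _ => t.
exact: countable_lebesgue_measure0 (countable_atomic_weights_section t).
Qed.

End Model.

Lemma measure_setD_null (d : measure_display) (X : measurableType d) (R : realType)
    (mu : {measure set X -> \bar R}) (S N : set X) :
  measurable S -> measurable N -> mu N = 0%E -> mu (S `\` N) = mu S.
Proof.
move=> mS mN N0; rewrite [RHS](measureDI mu mS mN).
rewrite [X in _ = (_ + X)%E](_ : _ = 0%E) ?adde0 //.
apply/eqP; rewrite eq_le measure_ge0 andbT -N0.
by apply: le_measure; rewrite ?inE //; exact: measurableI.
Qed.

Section Conclusion.
Variables (R : realType) (n : nat) (U Bmin : R).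
Local Notation T := (n.+2.-tuple R).
Variables (A : set T) (F : probability T R) (G : probability (T * R)%type R).
Variable r : T -> R.
Hypotheses (mA : measurable A) (A_pos : forall a, A a -> forall i, 0 < tnth a i).
Hypotheses (mr : measurable_fun A r) (r_pos : forall a, A a -> 0 < r a).
Hypotheses (densF : has_density_tuple F) (densG : has_density_pair G).
Hypothesis mTheta : measurable (Theta (d := n.+2) U Bmin).
Hypothesis GTheta : G (Theta U Bmin) = 1%E.

Definition exceptional : set T := ~` @pos_orthant R n.+2 `|` atomic_weights A F r.

Lemma measurable_exceptional : measurable exceptional.
Proof.
apply: measurableU; first by apply: measurableC; exact: measurable_pos_orthant.
exact: (@measurable_atomic_weights R n A F r mA mr r_pos).
Qed.

Lemma continuous_Kw_regular w : ~ exceptional w -> continuous (Kw_cdf F A r w).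
Proof.
move=> /not_orP[/contrapT wpos not_atomic].
exact: (@continuous_Kw_off_atomic R n A F r mA mr r_pos w wpos not_atomic).
Qed.

(* G gives no mass to exceptional weights: non-positive weights lie outside
   Theta, atomic ones form a null cylinder. *)
Lemma exceptional_null : G (fst @^-1` exceptional) = 0%E.
Proof.
have -> : fst @^-1` exceptional =
    (~` @pos_orthant R n.+2) `*` setT `|` atomic_weights A F r `*` setT :> set (T * R).
  apply/seteqP; split=> -[w b] /=; first by case=> H; [left|right].
  by case=> -[H _]; [left|right].
have outside : G (~` @pos_orthant R n.+2 `*` setT) = 0%E.
  have GC : G (~` Theta U Bmin) = 0%E by rewrite probability_setC // GTheta subee.
  apply/eqP; rewrite eq_le measure_ge0 andbT -GC; apply: le_measure; rewrite ?inE.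
  - by apply: measurableX => //; apply: measurableC; exact: measurable_pos_orthant.
  - exact: measurableC.
  by move=> [w b] [/= wpos _] [wTheta _]; apply: wpos => i; case/andP: (wTheta i).
apply/eqP; rewrite eq_le measure_ge0 andbT.
apply: le_trans (measureU2 _ _ _) _.
- by apply: measurableX => //; apply: measurableC; exact: measurable_pos_orthant.
- by apply: measurableX => //; exact: (@measurable_atomic_weights R n A F r mA mr r_pos).
have out0 : (G (~` @pos_orthant R n.+2 `*` setT) <= 0)%E by rewrite outside.
have /eqP := atomic_weights_null mA A_pos mr r_pos densF densG.
rewrite eq_le => /andP[atomic0 _].
by rewrite -[leRHS]adde0; apply: leeD; [exact: out0|exact: atomic0].
Qed.

Lemma atomless_Kw_almost_surely :
  {ae pushforward G fst, forall w, continuous (Kw_cdf F A r w)} /\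
  exists S, measurable S /\ S `<=` Theta' U Bmin F A r /\ G S = 1%E.
Proof.
have mE : measurable (fst @^-1` exceptional : set (T * R)).
  by rewrite -[X in measurable X]setTI; exact: measurable_fst measurable_exceptional.
split.
  exists exceptional; split; [exact: measurable_exceptional|exact: exceptional_null|].
  by move=> w /= not_cont; apply: contrapT => /continuous_Kw_regular.
exists (Theta U Bmin `\` fst @^-1` exceptional); split; [|split].
- exact: measurableD.
- by move=> [w b] [wTheta /= regular]; split => //; exact: continuous_Kw_regular.
- rewrite -GTheta; exact: (@measure_setD_null _ _ R G _ _ mTheta mE exceptional_null).
Qed.

End Conclusion.

Theorem mainTheorem12 (R : realType) (d : nat) (U Bmin : R)
  (A : set (d.-tuple R)) (F : probability (d.-tuple R) R)
  (G : probability (d.-tuple R * R)%type R) (r : d.-tuple R -> R) :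
  (2 <= d)%N -> 0 < U -> 0 < Bmin ->
  measurable A -> (forall a, A a -> forall i, 0 < tnth a i) ->
  F A = 1%E -> has_density_tuple F ->
  measurable (Theta (d:=d) U Bmin) -> G (Theta U Bmin) = 1%E -> has_density_pair G ->
  measurable_fun A r -> (forall a, A a -> 0 < r a) ->
  {ae pushforward G fst, forall w, continuous (Kw_cdf F A r w)} /\
  exists S, measurable S /\ S `<=` Theta' U Bmin F A r /\ G S = 1%E.
Proof.
case: d A F G r => [|[|n]] // A F G r _ _ _ mA A_pos _ densF mTheta GTheta densG mr r_pos.
exact: atomless_Kw_almost_surely mA A_pos mr r_pos densF densG mTheta GTheta.
Qed.
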